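(* Let $G=PL_\delta(\mathbb{R}_{+})$ and $H=\{f\in G : \lim_{x\to\infty} f(x)/x = 1\}$. Then the center of the quotient group $G/H$ is trivial.
   Context: A homeomorphism $f$ of $[0,\infty)$ is piecewise linear if its set $B(f)$ of breakpoints (points where $f$ is not differentiable) is discrete and $f$ is affine on each complementary interval. Its set of slopes is $\Lambda(f)=\{f'(t): t\notin B(f)\}$; $\Lambda(f)$ is bounded if there is $K>1$ with $K^{-1}<|\lambda|<K$ for all $\lambda\in\Lambda(f)$. $PL_\delta(\mathbb{R}_{+})$ denotes the group (under composition) of piecewise-linear homeomorphisms of $[0,\infty)$ with bounded set of slopes. $H$ is a normal subgroup of $G$. *)

From Stdlib Require Import Reals.
Open Scope R_scope.

(* Functions are R -> R; only their values on [0, +oo) matter. *)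

Definition cont_on_halfline (f : R -> R) : Prop :=
  forall x, 0 <= x -> forall eps, 0 < eps -> exists delta, 0 < delta /\
    forall y, 0 <= y -> Rabs (y - x) < delta -> Rabs (f y - f x) < eps.

Definition inv_on (f h : R -> R) : Prop :=
  (forall x, 0 <= x -> 0 <= h x) /\
  (forall x, 0 <= x -> h (f x) = x) /\
  (forall y, 0 <= y -> f (h y) = y).

Definition homeo_halfline (f : R -> R) : Prop :=
  (forall x, 0 <= x -> 0 <= f x) /\ cont_on_halfline f /\
  exists h, inv_on f h /\ cont_on_halfline h.

(* f is piecewise linear on [0,+oo) with a discrete (locally finite) set of
   breakpoints, and its set of slopes is bounded: there is a partition
   0 = x_0 < x_1 < ... -> +oo such that f is affine with slope a_n on each
   [x_n, x_{n+1}], and K^-1 < |a_n| < K for some K > 1. *)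
Definition PL_bounded (f : R -> R) : Prop :=
  exists (x a b : nat -> R),
    x 0%nat = 0 /\
    (forall n, x n < x (S n)) /\
    (forall M, exists n, M < x n) /\
    (forall n t, x n <= t <= x (S n) -> f t = a n * t + b n) /\
    exists K, 1 < K /\ forall n, / K < Rabs (a n) < K.

Definition in_G (f : R -> R) : Prop := homeo_halfline f /\ PL_bounded f.

Definition ratio_tends_to_1 (h : R -> R) : Prop :=
  forall eps, 0 < eps -> exists M, forall x, M <= x -> 0 < x ->
    Rabs (h x / x - 1) < eps.

Definition in_H (f : R -> R) : Prop := in_G f /\ ratio_tends_to_1 f.

From Stdlib Require Import Reals Lra Lia Psatz Classical ClassicalEpsilon.
Open Scope R_scope.

(* Elements of G are increasing bi-Lipschitz maps fixing 0, so t/K <= g t <= K t.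
   If g is not in H, pick a very sparse sequence z_n -> oo with |g(z_n)/z_n - 1| >= eps,
   and build f in G fixing every z_n, with slope 1 - 1/L on [z_n/L, z_n] and slope 2 on
   [z_n, L z_n] (L > K).  At w = g(z_n) the commutator f g f^-1 g^-1 takes the value
   f(w), and since w lies in [z_n/L, L z_n] but is far from z_n in ratio,
   |f(w)/w - 1| >= eps/L.  As w -> oo, the commutator is not in H. *)

Record PL_partition (F : R -> R) (x a b : nat -> R) : Prop := {
  knot0 : x 0%nat = 0;
  knot_lt_succ : forall n, x n < x (S n);
  knot_unbounded : forall M, exists n, M < x n;
  piece_affine : forall n t, x n <= t <= x (S n) -> F t = a n * t + b n }.

Section Knots.

Variable x : nat -> R.
Hypothesis x_lt_succ : forall n, x n < x (S n).

Lemma knot_lt n m : (n < m)%nat -> x n < x m.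
Proof.
  induction m as [|m IH]; intros Hnm; [lia|].
  destruct (Nat.eq_dec n m) as [->|Hne]; [apply x_lt_succ|].
  apply Rlt_trans with (x m); [apply IH; lia | apply x_lt_succ].
Qed.

Lemma knot_le n m : (n <= m)%nat -> x n <= x m.
Proof.
  intros Hnm. destruct (Nat.eq_dec n m) as [->|Hne]; [lra|].
  apply Rlt_le, knot_lt; lia.
Qed.

Lemma knot_nonneg : x 0%nat = 0 -> forall n, 0 <= x n.
Proof. intros Hx0 n. rewrite <- Hx0. apply knot_le; lia. Qed.

Lemma knot_piece_unique n m t :
  x n <= t < x (S n) -> x m <= t < x (S m) -> n = m.
Proof.
  intros Hn Hm. destruct (Nat.lt_total n m) as [H|[H|H]]; auto.
  - assert (x (S n) <= x m) by (apply knot_le; lia). lra.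
  - assert (x (S m) <= x n) by (apply knot_le; lia). lra.
Qed.

Lemma knot_piece_exists : (forall M, exists n, M < x n) ->
  forall t, x 0%nat <= t -> exists n, x n <= t < x (S n).
Proof.
  intros Hu t Ht. destruct (Hu t) as [m Hm]. induction m as [|m IH]; [lra|].
  destruct (Rlt_le_dec t (x m)) as [H|H]; [apply IH; auto | exists m; lra].
Qed.

End Knots.

Section Increasing_PL.

Variables (F : R -> R) (x a b : nat -> R) (K : R).
Hypothesis HF : PL_partition F x a b.
Hypothesis HK : 0 < K.
Hypothesis Ha : forall n, / K < a n < K.

Lemma PL_increment_bounds s t : 0 <= s -> s <= t ->
  (t - s) / K <= F t - F s <= K * (t - s).
Proof.
  destruct HF as [Hx0 _ Hu Hp].
  assert (Hpiece : forall n s t, x n <= s <= t -> t <= x (S n) ->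
             (t - s) / K <= F t - F s <= K * (t - s)).
  { intros n s' t' Hs Ht. rewrite (Hp n s'), (Hp n t') by lra.
    specialize (Ha n). unfold Rdiv. split; nra. }
  assert (Hupto : forall n s t, 0 <= s -> s <= t -> t <= x n ->
             (t - s) / K <= F t - F s <= K * (t - s)).
  { induction n as [|n IH]; intros s' t' Hs Hst Ht.
    - replace t' with s' by lra. unfold Rdiv. nra.
    - destruct (Rle_lt_dec t' (x n)) as [Htn|Htn]; [apply IH; auto|].
      destruct (Rle_lt_dec (x n) s') as [Hsn|Hsn]; [apply (Hpiece n); lra|].
      pose proof (IH s' (x n) Hs (Rlt_le _ _ Hsn) (Rle_refl _)).
      pose proof (Hpiece n (x n) t' ltac:(lra) Ht).
      unfold Rdiv in *. lra. }
  intros Hs Hst. destruct (Hu t) as [n Hn]. apply (Hupto n); lra.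
Qed.

Lemma PL_increasing_surjective : F 0 = 0 ->
  forall y, 0 <= y -> exists t, 0 <= t /\ F t = y.
Proof.
  intros HF0 y Hy. pose proof HF as [Hx0 Hx Hu Hp].
  assert (HKi : 0 < / K) by (apply Rinv_0_lt_compat; lra).
  assert (Hxnn := knot_nonneg x Hx Hx0).
  assert (HFu : forall M, exists n, M < F (x n)).
  { intro M. destruct (Hu (K * Rmax M 0)) as [n Hn]. exists n.
    pose proof (PL_increment_bounds 0 (x n) (Rle_refl 0) (Hxnn n)) as [B _].
    rewrite HF0 in B. pose proof (Rmax_l M 0). pose proof (Rmax_r M 0).
    assert (x n * / K > Rmax M 0).
    { apply (Rmult_lt_reg_r K); [lra|]. field_simplify; lra. }
    unfold Rdiv in B. lra. }
  destruct (knot_piece_exists (fun n => F (x n)) HFu y) as [n Hn];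
    [simpl; rewrite Hx0, HF0; lra|].
  simpl in Hn. specialize (Ha n).
  set (t := x n + (y - F (x n)) / a n).
  assert (Ht : a n * (t - x n) = y - F (x n)) by (unfold t; field; lra).
  pose proof (Hx n) as Hxn.
  assert (Hl : F (x n) = a n * x n + b n) by (apply Hp; lra).
  assert (Hr : F (x (S n)) = a n * x (S n) + b n) by (apply Hp; lra).
  assert (Hint : x n <= t <= x (S n)) by nra.
  exists t. split; [pose proof (Hxnn n); lra|].
  rewrite (Hp n t Hint). lra.
Qed.

End Increasing_PL.

Lemma lipschitz_cont_on_halfline F K : 0 < K ->
  (forall s t, 0 <= s -> 0 <= t -> Rabs (F t - F s) <= K * Rabs (t - s)) ->
  cont_on_halfline F.
Proof.
  intros HK HF t Ht eps Heps. exists (eps / K). split; [apply Rdiv_lt_0_compat; lra|].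
  intros s Hs Hd. pose proof (HF t s Ht Hs).
  assert (K * Rabs (s - t) < K * (eps / K)) by (apply Rmult_lt_compat_l; lra).
  replace (K * (eps / K)) with eps in * by (field; lra). lra.
Qed.

Lemma homeo_of_increment_bounds F K : 0 < K -> F 0 = 0 ->
  (forall s t, 0 <= s -> s <= t -> (t - s) / K <= F t - F s <= K * (t - s)) ->
  (forall y, 0 <= y -> exists t, 0 <= t /\ F t = y) -> homeo_halfline F.
Proof.
  intros HK HF0 Hb Hsurj.
  assert (HKi : 0 < / K) by (apply Rinv_0_lt_compat; lra).
  assert (Habs : forall s t, 0 <= s -> 0 <= t ->
            Rabs (t - s) / K <= Rabs (F t - F s) <= K * Rabs (t - s)).
  { intros s t Hs Ht. unfold Rdiv in *. destruct (Rle_lt_dec s t) as [H|H].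
    - pose proof (Hb s t Hs H). rewrite !Rabs_right; nra.
    - pose proof (Hb t s Ht (Rlt_le _ _ H)).
      rewrite (Rabs_minus_sym t s), (Rabs_minus_sym (F t) (F s)), !Rabs_right; nra. }
  assert (Hnn : forall t, 0 <= t -> 0 <= F t).
  { intros t Ht. pose proof (Hb 0 t (Rle_refl 0) Ht). unfold Rdiv in *. nra. }
  assert (Hinj : forall s t, 0 <= s -> 0 <= t -> F s = F t -> s = t).
  { intros s t Hs Ht E. pose proof (Habs s t Hs Ht) as [B _].
    rewrite E, Rminus_diag, Rabs_R0 in B.
    destruct (Req_dec s t) as [|Hne]; auto. exfalso.
    pose proof (Rabs_pos_lt (t - s) ltac:(lra)). unfold Rdiv in B. nra. }
  set (h := fun y => epsilon (inhabits 0) (fun t => 0 <= t /\ F t = y)).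
  assert (Hh : forall y, 0 <= y -> 0 <= h y /\ F (h y) = y).
  { intros y Hy. exact (epsilon_spec (inhabits 0) _ (Hsurj y Hy)). }
  split; [exact Hnn|]. split.
  - apply (lipschitz_cont_on_halfline F K HK). intros s t Hs Ht. apply Habs; auto.
  - exists h. split; [split; [|split]|].
    + intros y Hy. apply Hh; auto.
    + intros t Ht. apply Hinj; auto; apply Hh; auto.
    + intros y Hy. apply Hh; auto.
    + apply (lipschitz_cont_on_halfline h K HK). intros y y' Hy Hy'.
      destruct (Hh y Hy) as [H1 H2], (Hh y' Hy') as [H3 H4].
      pose proof (Habs (h y) (h y') H1 H3) as [B _]. rewrite H2, H4 in B.
      apply (Rmult_le_reg_r (/ K)); [lra|]. unfold Rdiv in B.
      replace (K * Rabs (y' - y) * / K) with (Rabs (y' - y)) by (field; lra). lra.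
Qed.

Lemma affine_corner_collision (F : R -> R) p d1 d2 a c :
  0 < d1 -> 0 < d2 -> a * c < 0 ->
  (forall t, p - d1 <= t <= p -> F t = F p + a * (t - p)) ->
  (forall t, p <= t <= p + d2 -> F t = F p + c * (t - p)) ->
  exists s t, p - d1 <= s < p /\ p < t <= p + d2 /\ F s = F t.
Proof.
  intros Hd1 Hd2 Hac Hl Hr.
  assert (Ha : 0 < Rabs a) by (apply Rabs_pos_lt; intros ->; lra).
  assert (Hc : 0 < Rabs c) by (apply Rabs_pos_lt; intros ->; lra).
  set (m := Rmin d1 d2).
  assert (Hm : 0 < m /\ m <= d1 /\ m <= d2)
    by (unfold m; repeat split; [apply Rmin_glb_lt | apply Rmin_l | apply Rmin_r]; lra).
  set (d := m / (Rabs a + Rabs c)).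
  assert (Hd : d * (Rabs a + Rabs c) = m) by (unfold d; field; lra).
  assert (Hd0 : 0 < d) by (apply Rdiv_lt_0_compat; lra).
  assert (Hsign : - a * Rabs c = c * Rabs a).
  { destruct (Rle_lt_dec 0 a) as [Ha0|Ha0].
    - assert (c < 0) by nra. rewrite Rabs_left, Rabs_right by lra. ring.
    - assert (0 < c) by nra. rewrite Rabs_right, Rabs_left by lra. ring. }
  (* the values at [p - |c| d] and [p + |a| d] agree because [a] and [c] have opposite signs *)
  exists (p - Rabs c * d), (p + Rabs a * d).
  repeat split; try nra.
  rewrite (Hl (p - Rabs c * d)), (Hr (p + Rabs a * d)) by nra.
  transitivity (F p + (- a * Rabs c) * d); [ring|]. rewrite Hsign. ring.
Qed.

Lemma PL_injective_slopes_same_sign F x a b :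
  PL_partition F x a b -> (forall n, a n <> 0) ->
  (forall s t, 0 <= s -> 0 <= t -> F s = F t -> s = t) ->
  forall n, 0 < a 0%nat * a n.
Proof.
  intros HF Hnz Hinj. pose proof HF as [Hx0 Hx _ Hp].
  assert (Hturn : forall n, 0 < a n * a (S n)).
  { intro n. destruct (Rlt_le_dec 0 (a n * a (S n))) as [H|H]; auto. exfalso.
    assert (a n * a (S n) <> 0) by (apply Rmult_integral_contrapositive_currified; auto).
    set (p := x (S n)).
    pose proof (Hx n). pose proof (Hx (S n)). pose proof (knot_nonneg x Hx Hx0 n).
    destruct (affine_corner_collision F p (p - x n) (x (S (S n)) - p) (a n) (a (S n)))
      as [s [t [Hs [Ht E]]]]; unfold p in *; try lra.
    - intros t Ht. rewrite (Hp n t), (Hp n (x (S n))) by lra. ring.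
    - intros t Ht. rewrite (Hp (S n) t), (Hp (S n) (x (S n))) by lra. ring.
    - apply Hinj in E; lra. }
  induction n as [|n IH]; [specialize (Hnz 0%nat); nra|].
  specialize (Hturn n). specialize (Hnz n).
  assert (0 < (a 0%nat * a n) * (a n * a (S n))) by (apply Rmult_lt_0_compat; auto).
  nra.
Qed.

Lemma in_G_increasing_PL g : in_G g ->
  exists x a b K, PL_partition g x a b /\ 0 < K /\ forall n, / K < a n < K.
Proof.
  intros [[Hnn [_ [h [[_ [Hhg _]] _]]]] [x [a [b [Hx0 [Hx [Hu [Hp [K [HK Ha]]]]]]]]]].
  assert (HP : PL_partition g x a b) by (constructor; auto).
  assert (HKi : 0 < / K) by (apply Rinv_0_lt_compat; lra).
  assert (Hnz : forall n, a n <> 0)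
    by (intros n E; specialize (Ha n); rewrite E, Rabs_R0 in Ha; lra).
  assert (Hsame : forall n, 0 < a 0%nat * a n).
  { apply (PL_injective_slopes_same_sign g x a b HP Hnz).
    intros s t Hs Ht E. rewrite <- (Hhg s Hs), <- (Hhg t Ht), E. reflexivity. }
  assert (Ha0 : 0 < a 0%nat).
  { destruct (Rlt_le_dec 0 (a 0%nat)) as [P|P]; auto. exfalso.
    (* then -g is increasing, contradicting g >= 0 *)
    assert (Hneg : forall n, / K < - a n < K).
    { intro n. specialize (Hsame n). specialize (Ha n). specialize (Hnz 0%nat).
      rewrite Rabs_left in Ha by nra. lra. }
    assert (HPneg : PL_partition (fun t => - g t) x (fun n => - a n) (fun n => - b n)).
    { constructor; auto. intros n t Ht. rewrite (Hp n t Ht). ring. }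
    set (t := K * (g 0 + 1)).
    assert (Ht : 0 <= t) by (unfold t; pose proof (Hnn 0 (Rle_refl 0)); nra).
    pose proof (PL_increment_bounds _ _ _ _ K HPneg Hneg 0 t (Rle_refl 0) Ht)
      as [B _].
    replace ((t - 0) / K) with (g 0 + 1) in B by (unfold t; field; lra).
    pose proof (Hnn t Ht). lra. }
  exists x, a, b, K. split; [exact HP|]. split; [lra|].
  intros n. specialize (Ha n). specialize (Hsame n).
  rewrite Rabs_right in Ha by nra. exact Ha.
Qed.

Lemma in_G_linear_bounds g : in_G g ->
  exists K, 0 < K /\ forall t, 0 <= t -> t / K <= g t <= K * t.
Proof.
  intros Hg. destruct (in_G_increasing_PL g Hg) as [x [a [b [K [HP [HK Ha]]]]]].
  destruct Hg as [[Hnn [_ [h [[Hh0 [_ Hgh]] _]]]] _].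
  assert (Hg0 : g 0 = 0).
  { pose proof (Hh0 0 (Rle_refl 0)) as Hh00.
    pose proof (PL_increment_bounds g x a b K HP Ha 0 (h 0) (Rle_refl 0) Hh00) as [B _].
    rewrite (Hgh 0 (Rle_refl 0)) in B.
    assert (0 <= h 0 / K) by (apply Rle_mult_inv_pos; lra).
    pose proof (Hnn 0 (Rle_refl 0)). lra. }
  exists K. split; auto. intros t Ht.
  pose proof (PL_increment_bounds g x a b K HP Ha 0 t (Rle_refl 0) Ht).
  rewrite Hg0, !Rminus_0_r in H. exact H.
Qed.

Definition piece_index (x : nat -> R) (t : R) : nat :=
  epsilon (inhabits 0%nat) (fun n => x n <= t < x (S n)).

Definition PL_fun (x a b : nat -> R) (t : R) : R :=
  a (piece_index x t) * t + b (piece_index x t).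

Section Gluing.

Variables x a b : nat -> R.
Hypothesis x_lt_succ : forall n, x n < x (S n).
Hypothesis pieces_agree : forall n, a n * x (S n) + b n = a (S n) * x (S n) + b (S n).

Lemma piece_index_spec n t : x n <= t < x (S n) -> piece_index x t = n.
Proof.
  intros Ht. symmetry. apply (knot_piece_unique x x_lt_succ n _ t Ht).
  exact (epsilon_spec (inhabits 0%nat) (fun n => x n <= t < x (S n)) (ex_intro _ n Ht)).
Qed.

Lemma PL_fun_piece n t : x n <= t <= x (S n) -> PL_fun x a b t = a n * t + b n.
Proof.
  intros [H1 [H2|H2]]; unfold PL_fun.
  - rewrite (piece_index_spec n t); lra.
  - subst t. rewrite (piece_index_spec (S n) (x (S n))), pieces_agree; [reflexivity|].
    pose proof (x_lt_succ (S n)). lra.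
Qed.

End Gluing.

Lemma PL_fun_in_G x a b K :
  x 0%nat = 0 -> (forall n, x n < x (S n)) -> (forall M, exists n, M < x n) ->
  (forall n, a n * x (S n) + b n = a (S n) * x (S n) + b (S n)) ->
  b 0%nat = 0 -> 1 < K -> (forall n, / K < a n < K) -> in_G (PL_fun x a b).
Proof.
  intros Hx0 Hx Hu Hagree Hb0 HK Ha.
  assert (HP : PL_partition (PL_fun x a b) x a b).
  { constructor; auto. apply PL_fun_piece; auto. }
  assert (HF0 : PL_fun x a b 0 = 0).
  { rewrite (PL_fun_piece x a b Hx Hagree 0%nat 0), Hb0; [ring|].
    pose proof (Hx 0%nat). lra. }
  split.
  - apply (homeo_of_increment_bounds _ K); [lra | exact HF0 | |].
    + exact (PL_increment_bounds _ x a b K HP Ha).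
    + exact (PL_increasing_surjective _ x a b K HP ltac:(lra) Ha HF0).
  - exists x, a, b. split; [exact Hx0|]. split; [exact Hx|]. split; [exact Hu|].
    split; [apply PL_fun_piece; auto|]. exists K. split; auto.
    intros n. specialize (Ha n).
    assert (0 < / K) by (apply Rinv_0_lt_compat; lra).
    rewrite Rabs_right by lra. exact Ha.
Qed.

Lemma slot_succ k : (k mod 5 < 4 /\ S k / 5 = k / 5 /\ S k mod 5 = S (k mod 5) \/
  k mod 5 = 4 /\ S k / 5 = S (k / 5) /\ S k mod 5 = 0)%nat.
Proof.
  pose proof (Nat.div_mod_eq k 5). pose proof (Nat.mod_upper_bound k 5 ltac:(lia)).
  pose proof (Nat.div_mod_eq (S k) 5). pose proof (Nat.mod_upper_bound (S k) 5 ltac:(lia)).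
  lia.
Qed.

Lemma slot_of n j : (j < 5)%nat -> ((5 * n + j) / 5 = n /\ (5 * n + j) mod 5 = j)%nat.
Proof.
  intros Hj. split; symmetry;
    [apply Nat.div_unique with j | apply Nat.mod_unique with n]; lia.
Qed.

Lemma slot_cases (P : nat -> nat -> nat -> nat -> Prop) :
  (forall n j, (j < 4)%nat -> P n j n (S j)) -> (forall n, P n 4%nat (S n) 0%nat) ->
  forall k, P (k / 5)%nat (k mod 5)%nat (S k / 5)%nat (S k mod 5)%nat.
Proof.
  intros Hin Hnext k.
  destruct (slot_succ k) as [[Hj [-> ->]]|[Hj [-> ->]]]; [apply Hin, Hj | rewrite Hj; apply Hnext].
Qed.

(* Block [n] of the bump: the identity up to [z n / L^2], then slopes
   2, 1 - 1/L, 2, 1/2 between the knots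
   [z n / L^2 < z n / L < z n < L z n < (3L - 2) z n], where it is the identity again. *)
Definition bump_knot (z : nat -> R) (L : R) (n j : nat) : R :=
  match j with
  | 0%nat => match n with 0%nat => 0 | S m => (3 * L - 2) * z m end
  | 1%nat => z n / (L * L)
  | 2%nat => z n / L
  | 3%nat => z n
  | _ => L * z n
  end.

Definition bump_slope (L : R) (j : nat) : R :=
  match j with
  | 0%nat => 1
  | 1%nat => 2
  | 2%nat => 1 - / L
  | 3%nat => 2
  | _ => / 2
  end.

Definition bump_icept (z : nat -> R) (L : R) (n j : nat) : R :=
  match j with
  | 0%nat => 0
  | 1%nat => - (z n / (L * L))
  | 2%nat => z n / L
  | 3%nat => - z n
  | _ => (3 * L / 2 - 1) * z n
  end.

Definition bump (z : nat -> R) (L : R) : R -> R :=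
  PL_fun (fun k => bump_knot z L (k / 5) (k mod 5))
         (fun k => bump_slope L (k mod 5))
         (fun k => bump_icept z L (k / 5) (k mod 5)).

Section Bump.

Variables (z : nat -> R) (L : R).
Hypothesis HL : 2 < L.
Hypothesis z_pos : forall n, 0 < z n.
(* the blocks [[z n / L^2, (3L - 2) z n]] follow each other in order *)
Hypothesis z_sparse : forall n, L * L * (3 * L - 2) * z n < z (S n).
Hypothesis z_unbounded : forall n, INR n < z n.

Lemma bump_knots_lt k :
  bump_knot z L (k / 5) (k mod 5) < bump_knot z L (S k / 5) (S k mod 5).
Proof.
  apply (slot_cases (fun n j n' j' => bump_knot z L n j < bump_knot z L n' j')).
  - intros n j Hj. pose proof (z_pos n).
    assert (HL2 : 1 < L * L) by nra.
    destruct j as [|[|[|[|j]]]]; simpl; try lia.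
    + destruct n as [|m]; [apply Rdiv_lt_0_compat; lra|].
      pose proof (z_sparse m). apply (Rmult_lt_reg_r (L * L)); [lra|].
      replace (z (S m) / (L * L) * (L * L)) with (z (S m)) by (field; lra). nra.
    + apply Rmult_lt_compat_l; [lra|]. apply Rinv_lt_contravar; nra.
    + apply (Rmult_lt_reg_r L); [lra|].
      replace (z n / L * L) with (z n) by (field; lra). nra.
    + nra.
  - intros n. pose proof (z_pos n). simpl. nra.
Qed.

Lemma bump_pieces_agree k :
  bump_slope L (k mod 5) * bump_knot z L (S k / 5) (S k mod 5) + bump_icept z L (k / 5) (k mod 5)
  = bump_slope L (S k mod 5) * bump_knot z L (S k / 5) (S k mod 5)
    + bump_icept z L (S k / 5) (S k mod 5).
Proof.
  apply (slot_cases (fun n j n' j' => bump_slope L j * bump_knot z L n' j' + bump_icept z L n j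
                                      = bump_slope L j' * bump_knot z L n' j' + bump_icept z L n' j')).
  - intros n [|[|[|[|j]]]] Hj; simpl; try lia; field; lra.
  - intros n. simpl. field.
Qed.

Lemma bump_in_G : in_G (bump z L).
Proof.
  apply (PL_fun_in_G _ _ _ 3); try reflexivity.
  - exact bump_knots_lt.
  - intros M. destruct (INR_unbounded M) as [n Hn]. exists (5 * n + 3)%nat.
    destruct (slot_of n 3 ltac:(lia)) as [-> ->]. simpl. pose proof (z_unbounded n). lra.
  - exact bump_pieces_agree.
  - lra.
  - intros k. pose proof (Nat.mod_upper_bound k 5 ltac:(lia)).
    assert (/ 3 < / 2) by (apply Rinv_lt_contravar; lra).
    assert (/ L < / 2) by (apply Rinv_lt_contravar; lra).
    assert (0 < / 3) by (apply Rinv_0_lt_compat; lra).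
    assert (0 < / L) by (apply Rinv_0_lt_compat; lra).
    destruct (k mod 5) as [|[|[|[|[|j]]]]]; simpl; try lia; lra.
Qed.

Lemma bump_piece n j t : (j < 4)%nat ->
  bump_knot z L n j <= t <= bump_knot z L n (S j) ->
  bump z L t = bump_slope L j * t + bump_icept z L n j.
Proof.
  intros Hj Ht. unfold bump.
  destruct (slot_of n j ltac:(lia)) as [Hdiv Hmod].
  rewrite (PL_fun_piece _ _ _ bump_knots_lt bump_pieces_agree (5 * n + j)), Hdiv, Hmod;
    [reflexivity|].
  replace (S (5 * n + j)) with (5 * n + S j)%nat by lia.
  destruct (slot_of n (S j) ltac:(lia)) as [-> ->]. rewrite Hdiv, Hmod. exact Ht.
Qed.

Lemma bump_fixes n : bump z L (z n) = z n.
Proof.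
  pose proof (z_pos n).
  rewrite (bump_piece n 3); simpl; [ring | lia | nra].
Qed.

Lemma bump_left n t : z n / L <= t <= z n -> bump z L t = (1 - / L) * t + z n / L.
Proof. intros Ht. rewrite (bump_piece n 2); simpl; [reflexivity | lia | exact Ht]. Qed.

Lemma bump_right n t : z n <= t <= L * z n -> bump z L t = 2 * t - z n.
Proof. intros Ht. rewrite (bump_piece n 3); simpl; [ring | lia | exact Ht]. Qed.

End Bump.

Lemma not_ratio_tends_to_1 h : ~ ratio_tends_to_1 h ->
  exists eps, 0 < eps /\
    forall M, exists x, M <= x /\ 0 < x /\ eps <= Rabs (h x / x - 1).
Proof.
  intros Hnot. apply not_all_ex_not in Hnot as [eps Heps].
  apply imply_to_and in Heps as [Heps HnM]. exists eps. split; [exact Heps|].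
  intros M. pose proof (not_ex_all_not _ _ HnM M) as HM.
  apply not_all_ex_not in HM as [x Hx].
  apply imply_to_and in Hx as [H1 Hx]. apply imply_to_and in Hx as [H2 Hx].
  exists x. repeat split; auto. apply Rnot_lt_le. exact Hx.
Qed.

Lemma sparse_sequence (P : R -> Prop) (C : R) :
  (forall M, exists t, M <= t /\ P t) ->
  exists z : nat -> R,
    (forall n, P (z n)) /\ (forall n, C * z n < z (S n)) /\ (forall n, INR n < z n).
Proof.
  intros HP.
  set (sel := fun M => proj1_sig (constructive_indefinite_description _ (HP M))).
  assert (Hsel : forall M, M <= sel M /\ P (sel M))
    by (intros M; exact (proj2_sig (constructive_indefinite_description _ (HP M)))).
  set (z := fix z n := match n with
                      | O => sel 1
                      | S m => sel (Rmax (C * z m + 1) (INR m + 2))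
                      end).
  exists z. split; [|split].
  - intros [|n]; apply Hsel.
  - intros n. simpl. pose proof (Rmax_l (C * z n + 1) (INR n + 2)).
    pose proof (Hsel (Rmax (C * z n + 1) (INR n + 2))). lra.
  - intros [|n].
    + simpl. pose proof (Hsel 1). lra.
    + rewrite S_INR. simpl. pose proof (Rmax_r (C * z n + 1) (INR n + 2)).
      pose proof (Hsel (Rmax (C * z n + 1) (INR n + 2))). lra.
Qed.

Lemma ratio_at_bump (f : R -> R) z w L eps :
  0 < L -> 0 < z -> z / L <= w <= L * z -> eps <= Rabs (w / z - 1) ->
  (forall t, z / L <= t <= z -> f t = (1 - / L) * t + z / L) ->
  (forall t, z <= t <= L * z -> f t = 2 * t - z) ->
  eps / L <= Rabs (f w / w - 1).
Proof.
  intros HL Hz Hw Heps Hleft Hright.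
  assert (Hw0 : 0 < w) by (pose proof (Rdiv_lt_0_compat z L Hz HL); lra).
  assert (HLi : 0 < / L) by (apply Rinv_0_lt_compat; lra).
  assert (Hzw : / L <= z / w).
  { assert (H : 0 <= (L * z - w) * / (L * w)) by (apply Rle_mult_inv_pos; nra).
    replace ((L * z - w) * / (L * w)) with (z / w - / L) in H by (field; lra). lra. }
  destruct (Rle_lt_dec w z) as [Hle|Hlt].
  - set (q := (z - w) / z).
    assert (Hq : 0 <= q) by (apply Rle_mult_inv_pos; lra).
    replace (w / z - 1) with (- q) in Heps by (unfold q; field; lra).
    rewrite Rabs_Ropp, Rabs_right in Heps by lra.
    assert (Hzw1 : 1 <= z / w).
    { assert (H : 0 <= (z - w) * / w) by (apply Rle_mult_inv_pos; lra).
      replace ((z - w) * / w) with (z / w - 1) in H by (field; lra). lra. }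
    rewrite Hleft by lra.
    replace (((1 - / L) * w + z / L) / w - 1) with (q * (z / w) * / L) by (unfold q; field; lra).
    rewrite Rabs_right by (apply Rle_ge, Rmult_le_pos; nra).
    unfold Rdiv at 1. apply Rmult_le_compat_r; nra.
  - set (q := (w - z) / z).
    assert (Hq : 0 <= q) by (apply Rle_mult_inv_pos; lra).
    replace (w / z - 1) with q in Heps by (unfold q; field; lra).
    rewrite Rabs_right in Heps by lra.
    rewrite Hright by lra.
    replace ((2 * w - z) / w - 1) with (q * (z / w)) by (unfold q; field; lra).
    rewrite Rabs_right by (apply Rle_ge, Rmult_le_pos; nra).
    unfold Rdiv at 1. nra.
Qed.

Lemma commutator_at_image f g finv ginv z : 0 <= z ->
  inv_on f finv -> inv_on g ginv -> f z = z ->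
  f (g (finv (ginv (g z)))) = f (g z).
Proof.
  intros Hz [_ [Hff _]] [_ [Hgg _]] Hfz.
  rewrite (Hgg z Hz). rewrite <- Hfz at 1. rewrite (Hff z Hz). reflexivity.
Qed.

Theorem theorem3 :
  forall g : R -> R, in_G g ->
    (forall f : R -> R, in_G f ->
       forall finv ginv : R -> R, inv_on f finv -> inv_on g ginv ->
         in_H (fun x => f (g (finv (ginv x))))) ->
    in_H g.
Proof.
  intros g Hg Hcomm. split; [exact Hg|].
  destruct (in_G_linear_bounds g Hg) as [K [HK Hgb]].
  apply NNPP; intros Hnot.
  destruct (not_ratio_tends_to_1 g Hnot) as [eps [Heps Hbad]].
  set (L := K + 2).
  destruct (sparse_sequence (fun t => 0 < t /\ eps <= Rabs (g t / t - 1))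
              (L * L * (3 * L - 2))) as [z [Hz [Hsparse Hzu]]].
  { intros M. destruct (Hbad M) as [t Ht]. exists t. tauto. }
  assert (HL : 2 < L) by (unfold L; lra).
  assert (Hzpos : forall n, 0 < z n) by (intro n; apply Hz).
  assert (Hf : in_G (bump z L)) by exact (bump_in_G z L HL Hzpos Hsparse Hzu).
  pose proof Hf as [[_ [_ [finv [Hfinv _]]]] _].
  pose proof Hg as [[_ [_ [ginv [Hginv _]]]] _].
  destruct (Hcomm _ Hf finv ginv Hfinv Hginv) as [_ Hratio].
  destruct (Hratio (eps / L)) as [M HM]; [apply Rdiv_lt_0_compat; lra|].
  destruct (INR_unbounded (L * M)) as [n Hn].
  destruct (Hz n) as [Hzn Hbadn]. pose proof (Hzu n).
  destruct (Hgb (z n) ltac:(lra)) as [Hlo Hhi].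
  assert (HML : M < z n / L).
  { apply (Rmult_lt_reg_l L); [lra|].
    replace (L * (z n / L)) with (z n) by (field; lra). lra. }
  assert (Hw : z n / L <= g (z n) <= L * z n).
  { split; [|unfold L; nra]. apply Rle_trans with (z n / K); [|lra].
    apply Rmult_le_compat_l; [lra|]. apply Rinv_le_contravar; unfold L; lra. }
  assert (Hw0 : 0 < g (z n)) by (pose proof (Rdiv_lt_0_compat (z n) L Hzn ltac:(lra)); lra).
  pose proof (HM (g (z n)) ltac:(lra) Hw0) as Hclose.
  rewrite (commutator_at_image _ _ _ _ (z n)) in Hclose; try lra; auto.
  - pose proof (ratio_at_bump (bump z L) (z n) (g (z n)) L eps ltac:(lra) Hzn Hw Hbadn
                  (bump_left z L HL Hzpos Hsparse n) (bump_right z L HL Hzpos Hsparse n)).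
    lra.
  - exact (bump_fixes z L HL Hzpos Hsparse n).
Qed.
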